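(* Let $0<q<1$, let $X\ge 0$ have a distribution $P_X$ with $q$-density $f$ and finite $q$-moments of all orders, and let $m\in\mathbb{N}$. If there is a constant $C>0$ such that $$f(q^{-mj})\ge C\,q^{mj(j+1)/2}\quad\text{for all } j\ge 0,$$ then $P_X$ is $q$-moment indeterminate.
   Context: Fix $0<q<1$. All random variables are non-negative. The Jackson $q$-integral is $\int_0^a g(t)\,d_qt=a(1-q)\sum_{j=0}^\infty g(aq^j)q^j$ for $a>0$, and the improper $q$-integral is $\int_0^\infty g(t)\,d_qt=(1-q)\sum_{j=-\infty}^{\infty}g(q^j)q^j$. A function $f$ on $(0,\infty)$ is a $q$-density of $X$ (with distribution function $F_X$) if $F_X(x)=\int_0^x f(t)\,d_qt$ for all $x>0$. The $n$-th $q$-moment is $m_q(n;f)=m_q(n;X)=\int_0^\infty t^nf(t)\,d_qt=(1-q)\sum_{j\in\mathbb{Z}}q^{j(n+1)}f(q^j)$, $n\in\mathbb{N}_0$. For functions $f,g$ on $(0,\infty)$ write $f\sim g$ iff $f(q^j)=g(q^j)$ for all $j\in\mathbb{Z}$. A distribution $P_X$ with $q$-density $f$ and finite $q$-moments of all orders is $q$-moment determinate if, whenever $Y$ is a random variable with $q$-density $g$ and $m_q(k;Y)=m_q(k;X)$ for all $k\in\mathbb{N}_0$, one has $f\sim g$; otherwise it is $q$-moment indeterminate. *)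

From Stdlib Require Import Reals Lra.
Open Scope R_scope.

(* Jackson q-integral on [0,a]:  int_0^a g d_qt = a(1-q) sum_{j>=0} g(a q^j) q^j,
   stated relationally: the series converges with the given value. *)
Definition jackson_int (q a : R) (g : R -> R) (v : R) : Prop :=
  infinite_sum (fun j : nat => a * (1 - q) * (g (a * q ^ j) * q ^ j)) v.

(* Improper q-integral int_0^oo g d_qt = (1-q) sum_{j in Z} g(q^j) q^j,
   the bilateral series being convergent (both halves j>=0 and j<0 converge). *)
Definition improper_qint (q : R) (g : R -> R) (v : R) : Prop :=
  exists v1 v2 : R,
    infinite_sum (fun j : nat => g (q ^ j) * q ^ j) v1 /\
    infinite_sum (fun j : nat => g (/ q ^ (S j)) * / q ^ (S j)) v2 /\
    v = (1 - q) * (v1 + v2).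

Definition qmoment (q : R) (f : R -> R) (n : nat) (v : R) : Prop :=
  improper_qint q (fun t => t ^ n * f t) v.

Definition nonneg_distribution_function (F : R -> R) : Prop :=
  (forall x y, x <= y -> F x <= F y) /\
  (forall x, x < 0 -> F x = 0) /\
  (forall x eps, 0 < eps -> exists d, 0 < d /\
       forall y, x < y < x + d -> Rabs (F y - F x) < eps) /\
  (forall eps, 0 < eps -> exists N, forall x, N < x -> Rabs (F x - 1) < eps).

Definition is_qdensity_of (q : R) (f F : R -> R) : Prop :=
  forall x, 0 < x -> jackson_int q x f (F x).

Definition is_qdensity (q : R) (f : R -> R) : Prop :=
  exists F, nonneg_distribution_function F /\ is_qdensity_of q f F.

Definition qequiv (q : R) (f g : R -> R) : Prop :=
  forall j : Z, f (powerRZ q j) = g (powerRZ q j).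

Definition qmoment_determinate (q : R) (f : R -> R) : Prop :=
  forall g : R -> R, is_qdensity q g ->
    (forall k : nat, exists v, qmoment q f k v /\ qmoment q g k v) ->
    qequiv q f g.

Definition qmoment_indeterminate (q : R) (f : R -> R) : Prop :=
  ~ qmoment_determinate q f.

From Stdlib Require Import Reals Lra Lia ZArith.
From Coquelicot Require Import Coquelicot.
Open Scope R_scope.

(* Put p := q^m.  Euler's series T(w) = sum_i c_i w^i, with c_0 = 1 and
   c_(i+1) = - p^(i+1) c_i / (1 - p^(i+1)), satisfies T(w) = (1 - p w) T(p w), hence
   T(p^-(r+1)) = 0 for every r, and |c_i| <= K p^(i(i+1)/2) with K = exp(p/(1-p)^2).
   Perturb the density by h := (C/K) c_i at the lattice point q^-(m i) (and by 0 at the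
   other points q^-t): its n-th q-moment is (C/K) T(p^-(n+1)) = 0, and the hypothesis
   f(q^-(m i)) >= C q^(m i(i+1)/2) keeps f + h nonnegative.  Since h(1) <> 0, f + h is a
   second q-density with the same q-moments, which is not ~ f. *)

Lemma is_series_tail (a : nat -> R) (L : R) :
  is_series a L -> is_series (fun j => a (S j)) (L - a O).
Proof.
  intro H. apply is_series_incr_1.
  match goal with |- is_series _ ?V => replace V with L by (unfold plus; simpl; ring) end.
  exact H.
Qed.

Lemma sparse_partial_sum (m : nat) (a b : nat -> R) :
  (1 <= m)%nat ->
  (forall i, a (m * i)%nat = b i) ->
  (forall i r, (0 < r < m)%nat -> a (m * i + r)%nat = 0) ->
  forall i r, (r < m)%nat -> sum_f_R0 a (m * i + r) = sum_f_R0 b i.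
Proof.
  intros Hm Hmul Hgap.
  assert (Hflat : forall i r, (r < m)%nat -> sum_f_R0 a (m * i + r) = sum_f_R0 a (m * i)).
  { intros i r. induction r as [| r IH]; intro Hr; [now rewrite Nat.add_0_r |].
    replace (m * i + S r)%nat with (S (m * i + r)) by lia. simpl.
    rewrite IH by lia. replace (S (m * i + r)) with (m * i + S r)%nat by lia.
    rewrite Hgap by lia. ring. }
  assert (Hmult : forall i, sum_f_R0 a (m * i) = sum_f_R0 b i).
  { induction i as [| i IH].
    - rewrite Nat.mul_0_r. simpl. now rewrite <- Hmul, Nat.mul_0_r.
    - replace (m * S i)%nat with (S (m * i + (m - 1))) by lia. simpl.
      rewrite Hflat, IH by lia.
      replace (S (m * i + (m - 1))) with (m * S i)%nat by lia. now rewrite Hmul. }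
  intros i r Hr. now rewrite Hflat, Hmult.
Qed.

Lemma sparse_series (m : nat) (a b : nat -> R) (l : R) :
  (1 <= m)%nat ->
  (forall i, a (m * i)%nat = b i) ->
  (forall i r, (0 < r < m)%nat -> a (m * i + r)%nat = 0) ->
  is_series b l -> is_series a l.
Proof.
  intros Hm Hmul Hgap Hb. apply is_series_Reals. apply is_series_Reals in Hb.
  intros e He. destruct (Hb e He) as [N HN]. exists (m * N)%nat. intros n Hn.
  assert (Hm0 : m <> 0%nat) by lia.
  rewrite (Nat.div_mod n m Hm0).
  rewrite (sparse_partial_sum m a b Hm Hmul Hgap) by (apply Nat.mod_upper_bound; lia).
  apply HN. apply Nat.div_le_lower_bound; lia.
Qed.

Lemma telescoping_sum (u : nat -> R) (n : nat) :
  sum_f_R0 (fun j => u j - u (S j)) n = u O - u (S n).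
Proof. induction n as [| n IH]; simpl; [| rewrite IH]; ring. Qed.

Lemma is_series_single (c : R) : is_series (fun j => if (j =? 0)%nat then c else 0) c.
Proof.
  apply is_series_Reals. intros e He. exists O. intros N _. unfold R_dist.
  match goal with |- context [sum_f_R0 ?a N] => assert (Hsum : sum_f_R0 a N = c) end.
  { induction N as [| N IH]; [reflexivity |]. rewrite tech5, IH. simpl. ring. }
  rewrite Hsum, Rminus_diag, Rabs_R0. lra.
Qed.

(* The triangular numbers i(i+1)/2, written exactly as in the growth hypothesis. *)
Definition tri (i : nat) : nat := (i * (i + 1) / 2)%nat.

Lemma tri_succ (i : nat) : tri (S i) = (tri i + S i)%nat.
Proof.
  unfold tri.
  replace (S i * (S i + 1))%nat with (i * (i + 1) + S i * 2)%nat by lia.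
  rewrite Nat.div_add; lia.
Qed.

Lemma exp_le_compat (a b : R) : a <= b -> exp a <= exp b.
Proof.
  intro H. destruct (Rle_lt_or_eq_dec _ _ H) as [Hlt | ->].
  - left. now apply exp_increasing.
  - apply Rle_refl.
Qed.

Lemma inv_one_minus_le_exp (p x : R) :
  p < 1 -> 0 <= x <= p -> / (1 - x) <= exp (x / (1 - p)).
Proof.
  intros Hp Hx.
  apply Rle_trans with (1 + x / (1 - p)); [| apply exp_ineq1_le].
  assert (Hprod : (1 - x) * (1 + x / (1 - p)) = 1 + x * (p - x) / (1 - p))
    by (field; lra).
  assert (0 <= x * (p - x) / (1 - p))
    by (apply Rdiv_le_0_compat; nra).
  apply (Rmult_le_reg_l (1 - x)); [lra |].
  rewrite Rinv_r, Hprod by lra. lra.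
Qed.

Section EulerSeries.
Variable p : R.
Hypothesis Hp : 0 < p < 1.

(* Coefficients of Euler's series  sum_i (-1)^i p^(i(i+1)/2) / ((1-p)...(1-p^i)) w^i. *)
Fixpoint euler_coef (i : nat) : R :=
  match i with
  | O => 1
  | S j => - p ^ S j * euler_coef j / (1 - p ^ S j)
  end.

Lemma pow_succ_bounds (i : nat) : 0 < p ^ S i <= p.
Proof.
  split; [apply pow_lt; lra |].
  assert (p ^ i <= 1) by (rewrite <- (pow1 i); apply pow_incr; lra).
  simpl. nra.
Qed.

Lemma euler_coef_neq0 (i : nat) : euler_coef i <> 0.
Proof.
  induction i as [| i IH]; simpl; [lra |].
  pose proof (pow_succ_bounds i) as Hb. simpl in Hb.
  apply Rmult_integral_contrapositive_currified.
  - apply Rmult_integral_contrapositive_currified; [lra | exact IH].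
  - apply Rinv_neq_0_compat. lra.
Qed.

(* Sharp form of the bound, suited to induction: the exponent is
   sum_(k=1..i) p^k/(1-p) = (p - p^(i+1))/(1-p)^2. *)
Lemma euler_coef_bound_sharp (i : nat) :
  Rabs (euler_coef i) <= exp ((p - p ^ S i) / (1 - p) ^ 2) * p ^ tri i.
Proof.
  induction i as [| i IH].
  - simpl. rewrite Rabs_R1.
    replace ((p - p * 1) / ((1 - p) * ((1 - p) * 1))) with 0 by (field; lra).
    rewrite exp_0. lra.
  - pose proof (pow_succ_bounds i) as Hx. set (x := p ^ S i) in *.
    assert (Hexp : exp ((p - p ^ S (S i)) / (1 - p) ^ 2)
                   = exp ((p - x) / (1 - p) ^ 2) * exp (x / (1 - p))).
    { rewrite <- exp_plus. f_equal. unfold x. simpl. field. lra. }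
    assert (Hstep : Rabs (euler_coef (S i)) = Rabs (euler_coef i) * x * / (1 - x)).
    { change (euler_coef (S i)) with (- x * euler_coef i / (1 - x)).
      unfold Rdiv. rewrite !Rabs_mult, Rabs_Ropp, Rabs_inv.
      rewrite (Rabs_right x), (Rabs_right (1 - x)) by lra. ring. }
    rewrite Hstep, Hexp, tri_succ, pow_add. fold x.
    assert (Hpos : 0 <= exp ((p - x) / (1 - p) ^ 2) * p ^ tri i * x).
    { apply Rmult_le_pos; [| lra].
      apply Rmult_le_pos; [left; apply exp_pos | apply pow_le; lra]. }
    apply Rle_trans with (exp ((p - x) / (1 - p) ^ 2) * p ^ tri i * x * / (1 - x)).
    + apply Rmult_le_compat_r; [left; apply Rinv_0_lt_compat; lra |].
      apply Rmult_le_compat_r; lra.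
    + replace (exp ((p - x) / (1 - p) ^ 2) * exp (x / (1 - p)) * (p ^ tri i * x))
        with (exp ((p - x) / (1 - p) ^ 2) * p ^ tri i * x * exp (x / (1 - p))) by ring.
      apply Rmult_le_compat_l; [exact Hpos |].
      apply inv_one_minus_le_exp; lra.
Qed.

Lemma euler_coef_bound (i : nat) :
  Rabs (euler_coef i) <= exp (p / (1 - p) ^ 2) * p ^ tri i.
Proof.
  eapply Rle_trans; [apply euler_coef_bound_sharp |].
  apply Rmult_le_compat_r; [apply pow_le; lra |].
  apply exp_le_compat. unfold Rdiv. apply Rmult_le_compat_r.
  - left. apply Rinv_0_lt_compat, pow_lt. lra.
  - pose proof (pow_succ_bounds i). lra.
Qed.

(* The coefficient ratios tend to 0, so the series has infinite radius. *)
Lemma euler_series_converges (w : R) : 0 < w -> ex_series (fun i => euler_coef i * w ^ i).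
Proof.
  intro Hw. apply ex_series_Rabs, ex_series_DAlembert with 0; [lra | |].
  { intro n. apply Rmult_integral_contrapositive_currified;
      [apply euler_coef_neq0 | apply pow_nonzero; lra]. }
  assert (Hgeom : is_lim_seq (fun n => p ^ S n) 0).
  { apply (is_lim_seq_incr_1 (fun n => p ^ n)), is_lim_seq_geom.
    rewrite Rabs_right; lra. }
  apply is_lim_seq_ext with (fun n => p ^ S n * w / (1 - p ^ S n)).
  { intro n. pose proof (pow_succ_bounds n). pose proof (euler_coef_neq0 n).
    assert (w ^ n <> 0) by (apply pow_nonzero; lra).
    replace (euler_coef (S n) * w ^ S n / (euler_coef n * w ^ n))
      with (- (p ^ S n * w / (1 - p ^ S n))) by (simpl; field; simpl in *; lra).
    rewrite Rabs_Ropp, Rabs_right; [reflexivity |].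
    apply Rle_ge, Rdiv_le_0_compat; nra. }
  replace 0 with (0 * w / (1 - 0)) by (field; lra).
  apply is_lim_seq_div'; [| | lra].
  - apply is_lim_seq_mult'; [exact Hgeom | apply is_lim_seq_const].
  - apply is_lim_seq_minus'; [apply is_lim_seq_const | exact Hgeom].
Qed.

Definition euler_fun (w : R) : R := Series (fun i => euler_coef i * w ^ i).

(* The q-difference equation T(w) = (1 - p w) T(p w), read off coefficientwise from
   c_(k+1) (1 - p^(k+1)) = - p^(k+1) c_k. *)
Lemma euler_fun_eq (w : R) : 0 < w -> euler_fun w = (1 - p * w) * euler_fun (p * w).
Proof.
  intro Hw. assert (Hpw : 0 < p * w) by nra.
  pose proof (Series_correct _ (euler_series_converges w Hw)) as Ha.
  pose proof (Series_correct _ (euler_series_converges _ Hpw)) as Hb.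
  fold (euler_fun w) in Ha. fold (euler_fun (p * w)) in Hb.
  assert (Hdiff : is_series (fun k => euler_coef k * w ^ k - euler_coef k * (p * w) ^ k)
                    (euler_fun w - euler_fun (p * w)))
    by exact (is_series_minus _ _ _ _ Ha Hb).
  apply is_series_tail in Hdiff.
  replace (euler_fun w - euler_fun (p * w) - _) with (euler_fun w - euler_fun (p * w))
    in Hdiff by (simpl; ring).
  assert (Hshift : forall k, euler_coef (S k) * w ^ S k - euler_coef (S k) * (p * w) ^ S k
                             = - (p * w) * (euler_coef k * (p * w) ^ k)).
  { intro k. pose proof (pow_succ_bounds k) as Hk. simpl in Hk |- *.
    rewrite !Rpow_mult_distr. field. lra. }
  apply (is_series_ext _ _ _ Hshift), is_series_unique in Hdiff.
  pose proof (is_series_unique _ _ (is_series_scal (- (p * w)) _ _ Hb)) as Hscal.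
  unfold scal in Hscal; simpl in Hscal; unfold mult in Hscal; simpl in Hscal.
  rewrite Hscal in Hdiff. lra.
Qed.

(* Iterating the q-difference equation from the zero at w = 1/p:
   T vanishes at every point p^-(r+1). *)
Lemma euler_fun_zero (r : nat) : euler_fun (/ p ^ S r) = 0.
Proof.
  induction r as [| r IH].
  - rewrite euler_fun_eq by (apply Rinv_0_lt_compat, pow_lt; lra).
    replace (1 - p * / p ^ 1) with 0 by (simpl; field; lra). ring.
  - rewrite euler_fun_eq by (apply Rinv_0_lt_compat, pow_lt; lra).
    replace (p * / p ^ S (S r)) with (/ p ^ S r) by (simpl; field; split;
      [apply pow_nonzero |]; lra).
    rewrite IH. ring.
Qed.

Lemma euler_series_zero (r : nat) :
  is_series (fun i => euler_coef i * (/ p ^ S r) ^ i) 0.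
Proof.
  rewrite <- (euler_fun_zero r).
  apply Series_correct, euler_series_converges, Rinv_0_lt_compat, pow_lt. lra.
Qed.
End EulerSeries.

Section QLattice.
Variable q : R.
Hypothesis Hq : 0 < q < 1.

(* The lattice points q^k, k in Z, which carry all the mass of a q-density. *)
Definition qz (k : Z) : R := powerRZ q k.

Lemma qz_pos (k : Z) : 0 < qz k.
Proof. apply powerRZ_lt. lra. Qed.

Lemma qz_succ (k : Z) : qz (k + 1) = qz k * q.
Proof. unfold qz. rewrite powerRZ_add by lra. simpl. ring. Qed.

Lemma qz_nat (n : nat) : qz (Z.of_nat n) = q ^ n.
Proof. unfold qz. now rewrite <- pow_powerRZ. Qed.

Lemma qz_opp_nat (n : nat) : qz (- Z.of_nat n) = / q ^ n.
Proof. unfold qz. now rewrite powerRZ_neg', <- pow_powerRZ. Qed.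

Lemma ln_q_neg : ln q < 0.
Proof. rewrite <- ln_1. apply ln_increasing; lra. Qed.

Lemma qz_exp (k : Z) : qz k = exp (IZR k * ln q).
Proof. unfold qz. now rewrite powerRZ_Rpower by lra. Qed.

Lemma qz_antitone (a b : Z) : (a <= b)%Z -> qz b <= qz a.
Proof.
  intro Hab. rewrite !qz_exp. apply exp_le_compat.
  pose proof ln_q_neg. apply IZR_le in Hab. nra.
Qed.

(* The index of the lattice cell [q^k, q^(k-1)) containing x > 0. *)
Definition cell (x : R) : Z := (1 - up (- (ln x / ln q)))%Z.

Lemma cell_spec (x : R) : 0 < x -> qz (cell x) <= x < qz (cell x - 1).
Proof.
  intro Hx. pose proof ln_q_neg as Hl.
  set (t := ln x / ln q).
  destruct (archimed (- t)) as [Hup1 Hup2].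
  assert (Hk : IZR (cell x) = 1 - IZR (up (- t))) by (unfold cell; now rewrite minus_IZR).
  assert (Hxt : x = exp (t * ln q)) by (unfold t; rewrite <- (exp_ln x) at 1 by lra;
                                           f_equal; field; lra).
  rewrite !qz_exp, minus_IZR, Hk, Hxt. split.
  - apply exp_le_compat.
    assert (0 <= (1 - IZR (up (- t)) - t) * (- ln q)) by (apply Rmult_le_pos; lra). lra.
  - apply exp_increasing.
    assert (0 < (t + IZR (up (- t))) * (- ln q)) by (apply Rmult_lt_0_compat; lra). lra.
Qed.

Lemma cell_ge (x : R) (K : Z) : 0 < x < qz (K - 1) -> (K <= cell x)%Z.
Proof.
  intro Hx. destruct (cell_spec x) as [Hlo _]; [lra |].
  destruct (Z.le_gt_cases K (cell x)) as [| Hlt]; [assumption |].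
  assert (qz (K - 1) <= qz (cell x)) by (apply qz_antitone; lia). lra.
Qed.

Lemma cell_le (x : R) (K : Z) : qz K <= x -> (cell x <= K)%Z.
Proof.
  intro Hx. destruct (cell_spec x) as [_ Hhi]; [pose proof (qz_pos K); lra |].
  destruct (Z.le_gt_cases (cell x) K) as [| Hlt]; [assumption |].
  assert (qz (cell x - 1) <= qz K) by (apply qz_antitone; lia). lra.
Qed.

Lemma cell_unique (x : R) (k : Z) : qz k <= x < qz (k - 1) -> cell x = k.
Proof.
  intro Hx. pose proof (qz_pos k).
  apply Z.le_antisymm; [apply cell_le | apply cell_ge]; lra.
Qed.

Lemma cell_qz (k : Z) : cell (qz k) = k.
Proof.
  apply cell_unique. split; [lra |].
  replace k with (k - 1 + 1)%Z at 1 by lia. rewrite qz_succ.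
  pose proof (qz_pos (k - 1)). nra.
Qed.

Lemma cell_antitone (x y : R) : 0 < x <= y -> (cell y <= cell x)%Z.
Proof. intro Hxy. apply cell_le. pose proof (cell_spec x). lra. Qed.

Lemma qz_unbounded (N : R) : exists K, N < qz K.
Proof.
  exists (cell (Rmax N 1) - 1)%Z.
  destruct (cell_spec (Rmax N 1)) as [_ Hhi]; [pose proof (Rmax_r N 1); lra |].
  pose proof (Rmax_l N 1). lra.
Qed.

Section LatticeDistribution.
(* A Z-indexed family Phi, nonincreasing, with limit 0 at +oo and 1 at -oo:
   Phi k is the mass of [0, q^k] of a distribution living on the lattice. *)
Variable Phi : Z -> R.
Hypothesis Phi_step : forall k, Phi (k + 1) <= Phi k.
Hypothesis Phi_to0 : forall e, 0 < e -> exists K, forall k, (K <= k)%Z -> Rabs (Phi k) < e.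
Hypothesis Phi_to1 : forall e, 0 < e -> exists K, forall k, (k <= K)%Z -> Rabs (Phi k - 1) < e.

Lemma Phi_antitone (a b : Z) : (a <= b)%Z -> Phi b <= Phi a.
Proof.
  intro Hab. replace b with (a + Z.of_nat (Z.to_nat (b - a)))%Z by lia.
  induction (Z.to_nat (b - a)) as [| n IH]; [rewrite Z.add_0_r; lra |].
  rewrite Nat2Z.inj_succ, <- Z.add_1_r, Z.add_assoc.
  pose proof (Phi_step (a + Z.of_nat n)). lra.
Qed.

Lemma Phi_nonneg (k : Z) : 0 <= Phi k.
Proof.
  destruct (Rle_lt_dec 0 (Phi k)) as [| Hneg]; [assumption |].
  destruct (Phi_to0 (- Phi k)) as [K HK]; [lra |].
  pose proof (HK (Z.max K k) (Z.le_max_l _ _)) as Hsmall.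
  pose proof (Phi_antitone k (Z.max K k) (Z.le_max_r _ _)).
  rewrite Rabs_left in Hsmall by lra. lra.
Qed.

Definition lattice_cdf (x : R) : R := if Rle_dec x 0 then 0 else Phi (cell x).

(* Its q-density: the jump at x spread over the Jackson weight (1-q) x. *)
Definition lattice_density (x : R) : R :=
  (lattice_cdf x - lattice_cdf (q * x)) / ((1 - q) * x).

Lemma lattice_cdf_pos (x : R) : 0 < x -> lattice_cdf x = Phi (cell x).
Proof. intro Hx. unfold lattice_cdf. destruct (Rle_dec x 0); [lra | reflexivity]. Qed.

Lemma lattice_cdf_qz (k : Z) : lattice_cdf (qz k) = Phi k.
Proof. rewrite lattice_cdf_pos by apply qz_pos. now rewrite cell_qz. Qed.

Lemma lattice_density_qz (k : Z) :
  lattice_density (qz k) = (Phi k - Phi (k + 1)) / ((1 - q) * qz k).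
Proof.
  unfold lattice_density.
  replace (q * qz k) with (qz (k + 1)) by (rewrite qz_succ; ring).
  now rewrite !lattice_cdf_qz.
Qed.

Lemma lattice_cdf_near0 (e : R) :
  0 < e -> exists d, 0 < d /\ forall y, 0 < y < d -> Rabs (lattice_cdf y) < e.
Proof.
  intro He. destruct (Phi_to0 e He) as [K HK].
  exists (qz (K - 1)). split; [apply qz_pos |].
  intros y Hy. rewrite lattice_cdf_pos by lra. apply HK, cell_ge. lra.
Qed.

Lemma lattice_cdf_distribution : nonneg_distribution_function lattice_cdf.
Proof.
  split; [| split; [| split]].
  - intros x y Hxy. unfold lattice_cdf.
    destruct (Rle_dec x 0), (Rle_dec y 0); try lra; [apply Phi_nonneg |].
    apply Phi_antitone, cell_antitone. lra.
  - intros x Hx. unfold lattice_cdf. destruct (Rle_dec x 0); [reflexivity | lra].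
  - intros x e He. destruct (Rtotal_order x 0) as [Hx | [-> | Hx]].
    + exists (- x). split; [lra |]. intros y Hy. unfold lattice_cdf.
      destruct (Rle_dec y 0), (Rle_dec x 0); try lra.
      rewrite Rminus_0_r, Rabs_R0. lra.
    + destruct (lattice_cdf_near0 e He) as [d [Hd Hnear]]. exists d. split; [lra |].
      intros y Hy. unfold lattice_cdf at 2. destruct (Rle_dec 0 0); [| lra].
      rewrite Rminus_0_r. apply Hnear. lra.
    + destruct (cell_spec x Hx) as [Hlo Hhi].
      exists (qz (cell x - 1) - x). split; [lra |].
      intros y Hy. rewrite !lattice_cdf_pos, (cell_unique y (cell x)) by lra.
      rewrite Rminus_diag, Rabs_R0. lra.
  - intros e He. destruct (Phi_to1 e He) as [K HK]. exists (qz K). intros x Hx.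
    pose proof (qz_pos K). rewrite lattice_cdf_pos by lra.
    apply HK, cell_le. lra.
Qed.

(* The Jackson sums of lattice_density telescope to lattice_cdf x - lattice_cdf (x q^(n+1)),
   and the last term vanishes in the limit by right continuity at 0. *)
Lemma lattice_density_spec : is_qdensity_of q lattice_density lattice_cdf.
Proof.
  intros x Hx e He. destruct (lattice_cdf_near0 e He) as [d [Hd Hnear]].
  destruct (pow_lt_1_zero q) with (d / x) as [N HN];
    [rewrite Rabs_right; lra | apply Rdiv_lt_0_compat; lra |].
  exists N. intros n Hn.
  rewrite (sum_eq _ (fun j => lattice_cdf (x * q ^ j) - lattice_cdf (x * q ^ S j))).
  2:{ intros j _. unfold lattice_density.
      replace (q * (x * q ^ j)) with (x * q ^ S j) by (simpl; ring).
      assert (0 < q ^ j) by (apply pow_lt; lra). field. split; nra. }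
  rewrite (telescoping_sum (fun j => lattice_cdf (x * q ^ j))). unfold R_dist.
  rewrite pow_O, Rmult_1_r.
  replace (lattice_cdf x - lattice_cdf (x * q ^ S n) - lattice_cdf x)
    with (- lattice_cdf (x * q ^ S n)) by ring.
  rewrite Rabs_Ropp. apply Hnear.
  assert (0 < q ^ S n) by (apply pow_lt; lra).
  specialize (HN (S n) ltac:(lia)). rewrite Rabs_right in HN by (apply Rle_ge, pow_le; lra).
  apply (Rmult_lt_compat_l x) in HN; [| lra].
  replace (x * (d / x)) with d in HN by (field; lra). split; nra.
Qed.

End LatticeDistribution.

Section QDensity.
Variables f F : R -> R.
Hypothesis HF : nonneg_distribution_function F.
Hypothesis Hd : is_qdensity_of q f F.

(* Comparing the Jackson sums at q^k and q^(k+1): F jumps by (1-q) q^k f(q^k) at q^k. *)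
Lemma qdensity_jump (k : Z) : F (qz k) - F (qz (k + 1)) = (1 - q) * qz k * f (qz k).
Proof.
  pose proof (Hd (qz k) (qz_pos k)) as Hk. pose proof (Hd (qz (k + 1)) (qz_pos (k + 1))) as Hk1.
  unfold jackson_int in Hk, Hk1. apply is_series_Reals in Hk, Hk1.
  assert (Hshift : forall j, qz k * (1 - q) * (f (qz k * q ^ S j) * q ^ S j)
                             = qz (k + 1) * (1 - q) * (f (qz (k + 1) * q ^ j) * q ^ j)).
  { intro j. rewrite qz_succ. simpl.
    replace (qz k * (q * q ^ j)) with (qz k * q * q ^ j) by ring. ring. }
  apply is_series_tail, (is_series_ext _ _ _ Hshift), is_series_unique in Hk.
  apply is_series_unique in Hk1. rewrite Hk1 in Hk.
  simpl in Hk. rewrite !Rmult_1_r in Hk. lra.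
Qed.

Lemma qdensity_nonneg (k : Z) : 0 <= f (qz k).
Proof.
  destruct HF as [Hmono _].
  assert (F (qz (k + 1)) <= F (qz k)) by (apply Hmono, qz_antitone; lia).
  pose proof (qdensity_jump k). pose proof (qz_pos k).
  assert (0 < (1 - q) * qz k) by (apply Rmult_lt_0_compat; lra).
  destruct (Rle_lt_dec 0 (f (qz k))) as [| Hneg]; [assumption |].
  assert ((1 - q) * qz k * f (qz k) < 0)
    by (rewrite <- (Rmult_0_r ((1 - q) * qz k)); apply Rmult_lt_compat_l; assumption).
  lra.
Qed.

(* F(q^k) -> 0 as k -> +oo: the Jackson sums at 1 are F 1 - F(q^(n+1)). *)
Lemma cdf_lattice_to0 (e : R) :
  0 < e -> exists K, forall k, (K <= k)%Z -> Rabs (F (qz k)) < e.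
Proof.
  intro He. destruct (Hd 1 Rlt_0_1 e He) as [N HN]. exists (Z.of_nat (S N)).
  intros k Hk. replace k with (Z.of_nat (S (Z.to_nat k - 1))) by lia.
  specialize (HN (Z.to_nat k - 1)%nat ltac:(lia)). unfold R_dist in HN.
  rewrite (sum_eq _ (fun j => F (qz (Z.of_nat j)) - F (qz (Z.of_nat (S j))))) in HN.
  2:{ intros j _. rewrite Nat2Z.inj_succ, <- Z.add_1_r, qdensity_jump, qz_nat, !Rmult_1_l. ring. }
  rewrite (telescoping_sum (fun j => F (qz (Z.of_nat j)))) in HN.
  change (qz (Z.of_nat 0)) with 1 in HN.
  replace (F 1 - F (qz (Z.of_nat (S (Z.to_nat k - 1)))) - F 1)
    with (- F (qz (Z.of_nat (S (Z.to_nat k - 1))))) in HN by ring.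
  now rewrite Rabs_Ropp in HN.
Qed.

(* F(q^k) -> 1 as k -> -oo, since q^k -> +oo. *)
Lemma cdf_lattice_to1 (e : R) :
  0 < e -> exists K, forall k, (k <= K)%Z -> Rabs (F (qz k) - 1) < e.
Proof.
  intro He. destruct HF as (_ & _ & _ & Hlim).
  destruct (Hlim e He) as [N HN]. destruct (qz_unbounded N) as [K HK].
  exists K. intros k Hk. apply HN. pose proof (qz_antitone _ _ Hk). lra.
Qed.

Section Perturbation.
(* A signed perturbation h t of the density at the lattice point q^-t (t >= 0), keeping
   the density nonnegative and having all q-moments (in particular its mass) zero. *)
Variable h : nat -> R.
Hypothesis h_nonneg : forall t, 0 <= f (/ q ^ t) + h t.
Hypothesis h_moments : forall n, is_series (fun t => (/ q ^ t) ^ n * h t * / q ^ t) 0.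

Definition hz (k : Z) : R := if Z.leb k 0 then h (Z.to_nat (- k)) else 0.

(* The mass the perturbation adds to [0, q^k], i.e. to the points q^-t with t <= -k. *)
Definition pert_mass (k : Z) : R :=
  if Z.leb k 0 then sum_f_R0 (fun t => (1 - q) * / q ^ t * h t) (Z.to_nat (- k)) else 0.

Definition pert_Phi (k : Z) : R := F (qz k) + pert_mass k.

Lemma Z_pos_or_opp_nat (k : Z) : (0 < k)%Z \/ exists n, k = (- Z.of_nat n)%Z.
Proof.
  destruct (Z.lt_ge_cases 0 k); [now left |].
  right. exists (Z.to_nat (- k)). lia.
Qed.

Lemma hz_opp_nat (n : nat) : hz (- Z.of_nat n) = h n.
Proof.
  unfold hz. destruct (Z.leb_spec (- Z.of_nat n) 0); [| lia].
  now rewrite Z.opp_involutive, Nat2Z.id.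
Qed.

Lemma hz_pos (k : Z) : (0 < k)%Z -> hz k = 0.
Proof. intro Hk. unfold hz. destruct (Z.leb_spec k 0); [lia | reflexivity]. Qed.

Lemma pert_mass_opp_nat (n : nat) :
  pert_mass (- Z.of_nat n) = sum_f_R0 (fun t => (1 - q) * / q ^ t * h t) n.
Proof.
  unfold pert_mass. destruct (Z.leb_spec (- Z.of_nat n) 0); [| lia].
  now rewrite Z.opp_involutive, Nat2Z.id.
Qed.

Lemma pert_mass_pos (k : Z) : (0 < k)%Z -> pert_mass k = 0.
Proof. intro Hk. unfold pert_mass. destruct (Z.leb_spec k 0); [lia | reflexivity]. Qed.

Lemma pert_mass_jump (k : Z) : pert_mass k - pert_mass (k + 1) = (1 - q) * qz k * hz k.
Proof.
  destruct (Z_pos_or_opp_nat k) as [Hk | [n ->]].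
  - rewrite !pert_mass_pos, hz_pos by lia. ring.
  - rewrite pert_mass_opp_nat, hz_opp_nat, qz_opp_nat. destruct n as [| n].
    + rewrite pert_mass_pos by lia. simpl. ring.
    + replace (- Z.of_nat (S n) + 1)%Z with (- Z.of_nat n)%Z by lia.
      rewrite pert_mass_opp_nat. simpl sum_f_R0. change (q ^ S n) with (q * q ^ n). ring.
Qed.

Lemma pert_Phi_jump (k : Z) :
  pert_Phi k - pert_Phi (k + 1) = (1 - q) * qz k * (f (qz k) + hz k).
Proof.
  unfold pert_Phi. pose proof (qdensity_jump k). pose proof (pert_mass_jump k). lra.
Qed.

Lemma perturbed_nonneg (k : Z) : 0 <= f (qz k) + hz k.
Proof.
  destruct (Z_pos_or_opp_nat k) as [Hk | [n ->]].
  - rewrite hz_pos, Rplus_0_r by assumption. apply qdensity_nonneg.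
  - rewrite hz_opp_nat, qz_opp_nat. apply h_nonneg.
Qed.

Lemma pert_Phi_step (k : Z) : pert_Phi (k + 1) <= pert_Phi k.
Proof.
  pose proof (pert_Phi_jump k). pose proof (perturbed_nonneg k). pose proof (qz_pos k).
  assert (0 <= (1 - q) * qz k * (f (qz k) + hz k))
    by (apply Rmult_le_pos; [apply Rmult_le_pos |]; lra).
  lra.
Qed.

(* Above the lattice point 1 nothing is perturbed. *)
Lemma pert_Phi_to0 (e : R) :
  0 < e -> exists K, forall k, (K <= k)%Z -> Rabs (pert_Phi k) < e.
Proof.
  intro He. destruct (cdf_lattice_to0 e He) as [K HK]. exists (Z.max K 1).
  intros k Hk. unfold pert_Phi. rewrite pert_mass_pos, Rplus_0_r by lia. apply HK. lia.
Qed.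

(* The perturbation has total mass (1-q) * (0-th moment) = 0. *)
Lemma pert_Phi_to1 (e : R) :
  0 < e -> exists K, forall k, (k <= K)%Z -> Rabs (pert_Phi k - 1) < e.
Proof.
  intro He. destruct (cdf_lattice_to1 (e / 2)) as [K HK]; [lra |].
  pose proof (is_series_scal (1 - q) _ _ (h_moments 0)) as Hmass.
  apply is_series_Reals in Hmass.
  destruct (Hmass (e / 2)) as [N HN]; [lra |].
  exists (Z.min K (- Z.of_nat N)). intros k Hk.
  replace k with (- Z.of_nat (Z.to_nat (- k)))%Z in * by lia.
  unfold pert_Phi. rewrite pert_mass_opp_nat.
  specialize (HN (Z.to_nat (- k)) ltac:(lia)). unfold R_dist in HN.
  rewrite (sum_eq _ (fun t => (1 - q) * / q ^ t * h t)) in HN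
    by (intros t _; simpl; unfold scal; simpl; unfold mult; simpl; ring).
  change (scal (1 - q) 0) with ((1 - q) * 0) in HN.
  rewrite Rmult_0_r, Rminus_0_r in HN.
  assert (Rabs (F (qz (- Z.of_nat (Z.to_nat (- k)))) - 1) < e / 2) by (apply HK; lia).
  match goal with |- Rabs (?a + ?s - 1) < _ =>
    replace (a + s - 1) with ((a - 1) + s) by ring end.
  eapply Rle_lt_trans; [apply Rabs_triang | lra].
Qed.

Definition pert_density : R -> R := lattice_density pert_Phi.

Lemma pert_density_qz (k : Z) : pert_density (qz k) = f (qz k) + hz k.
Proof.
  unfold pert_density. rewrite lattice_density_qz, pert_Phi_jump.
  pose proof (qz_pos k). field. lra.
Qed.

Lemma pert_is_qdensity : is_qdensity q pert_density.
Proof.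
  exists (lattice_cdf pert_Phi). split.
  - apply lattice_cdf_distribution;
      [exact pert_Phi_step | exact pert_Phi_to0 | exact pert_Phi_to1].
  - apply lattice_density_spec, pert_Phi_to0.
Qed.

(* The perturbation only moves the q-moments by its own moments, which are zero:
   the part j >= 0 of the bilateral series gains h 0 (at the point 1),
   the part j < 0 gains the remaining terms, which sum to -h 0. *)
Lemma pert_moments (n : nat) (v : R) : qmoment q f n v -> qmoment q pert_density n v.
Proof.
  intros (v1 & v2 & Hpos & Hneg & Hv).
  exists (v1 + h 0), (v2 - h 0). split; [| split]; [| | rewrite Hv; ring].
  - apply is_series_Reals in Hpos. apply is_series_Reals.
    assert (Hat1 : is_series (fun j => (q ^ j) ^ n * hz (Z.of_nat j) * q ^ j) (h 0)).
    { eapply is_series_ext; [| apply (is_series_single (h 0))].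
      intros [| j]; simpl.
      - unfold hz. simpl. rewrite pow1. ring.
      - rewrite hz_pos by lia. ring. }
    eapply is_series_ext; [| exact (is_series_plus _ _ _ _ Hpos Hat1)].
    intro j. simpl. rewrite <- qz_nat, pert_density_qz. unfold plus. simpl. ring.
  - apply is_series_Reals in Hneg. apply is_series_Reals.
    pose proof (is_series_tail _ _ (h_moments n)) as Hbelow1.
    replace (0 - _) with (- h 0) in Hbelow1 by (simpl; rewrite Rinv_1, pow1; ring).
    replace (v2 - h 0) with (plus v2 (- h 0)) by reflexivity.
    eapply is_series_ext; [| exact (is_series_plus _ _ _ _ Hneg Hbelow1)].
    intro j. cbv beta. rewrite <- qz_opp_nat, pert_density_qz, hz_opp_nat, qz_opp_nat.
    unfold plus. simpl. ring.
Qed.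

Lemma perturbation_indeterminate (t : nat) :
  (forall k, exists v, qmoment q f k v) -> h t <> 0 -> qmoment_indeterminate q f.
Proof.
  intros Hmom Ht Hdet.
  assert (Hequiv : qequiv q f pert_density).
  { apply Hdet; [exact pert_is_qdensity |].
    intro k. destruct (Hmom k) as [v Hv]. exists v. split; [exact Hv |].
    now apply pert_moments. }
  specialize (Hequiv (- Z.of_nat t)%Z). fold (qz (- Z.of_nat t)) in Hequiv.
  rewrite pert_density_qz, hz_opp_nat in Hequiv. lra.
Qed.
End Perturbation.
End QDensity.
End QLattice.

Section EulerPerturbation.
Variables (q : R) (m : nat) (C : R).
Hypothesis Hq : 0 < q < 1.
Hypothesis Hm : (1 <= m)%nat.
Hypothesis HC : 0 < C.

Lemma qm_bounds : 0 < q ^ m < 1.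
Proof. split; [apply pow_lt; lra | apply pow_lt_1_compat; [lra | lia]]. Qed.

(* The scaling C / exp(p/(1-p)^2), p = q^m, that makes the perturbation dominated by
   the assumed lower bound on f. *)
Definition euler_scale : R := C / exp (q ^ m / (1 - q ^ m) ^ 2).

Lemma euler_scale_pos : 0 < euler_scale.
Proof. apply Rdiv_lt_0_compat; [exact HC | apply exp_pos]. Qed.

Definition euler_pert (t : nat) : R :=
  if (t mod m =? 0)%nat then euler_scale * euler_coef (q ^ m) (t / m) else 0.

Lemma euler_pert_multiple (i : nat) : euler_pert (m * i) = euler_scale * euler_coef (q ^ m) i.
Proof.
  unfold euler_pert. rewrite Nat.mul_comm, Nat.Div0.mod_mul, Nat.div_mul by lia.
  reflexivity.
Qed.

Lemma euler_pert_gap (i r : nat) : (0 < r < m)%nat -> euler_pert (m * i + r) = 0.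
Proof.
  intro Hr. unfold euler_pert.
  replace (m * i + r)%nat with (r + i * m)%nat by lia.
  rewrite Nat.Div0.mod_add, Nat.mod_small by lia.
  destruct (Nat.eqb_spec r 0); [lia | reflexivity].
Qed.

(* The n-th moment is euler_scale * T(p^-(n+1)) = 0. *)
Lemma euler_pert_moments (n : nat) :
  is_series (fun t => (/ q ^ t) ^ n * euler_pert t * / q ^ t) 0.
Proof.
  apply sparse_series with m (fun i => euler_scale * (euler_coef (q ^ m) i * (/ (q ^ m) ^ S n) ^ i));
    [exact Hm | | |].
  - intro i. rewrite euler_pert_multiple, <- !pow_mult, <- !pow_inv, <- !pow_mult.
    replace (m * S n * i)%nat with (m * i * n + m * i)%nat by lia.
    rewrite pow_add. ring.
  - intros i r Hr. rewrite euler_pert_gap by exact Hr. ring.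
  - replace 0 with (euler_scale * 0) by ring.
    exact (is_series_scal _ _ _ (euler_series_zero (q ^ m) qm_bounds n)).
Qed.

(* The growth hypothesis on f dominates the perturbation, by the bound on c_i. *)
Lemma euler_pert_nonneg (f : R -> R) :
  (forall t, 0 <= f (/ q ^ t)) ->
  (forall j : nat, f (/ q ^ (m * j)) >= C * q ^ (m * (j * (j + 1) / 2))) ->
  forall t, 0 <= f (/ q ^ t) + euler_pert t.
Proof.
  intros Hf0 Hgrowth t. unfold euler_pert.
  destruct (Nat.eqb_spec (t mod m) 0) as [Hmod | _]; [| rewrite Rplus_0_r; apply Hf0].
  set (i := (t / m)%nat).
  assert (Ht : t = (m * i)%nat) by (pose proof (Nat.div_mod t m); unfold i; lia).
  rewrite Ht. pose proof (Hgrowth i) as Hfi. fold (tri i) in Hfi.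
  pose proof (euler_coef_bound (q ^ m) qm_bounds i) as Hc. rewrite <- pow_mult in Hc.
  assert (Hdom : euler_scale * Rabs (euler_coef (q ^ m) i) <= C * q ^ (m * tri i)).
  { apply Rle_trans with (euler_scale * (exp (q ^ m / (1 - q ^ m) ^ 2) * q ^ (m * tri i))).
    - apply Rmult_le_compat_l; [left; apply euler_scale_pos | exact Hc].
    - right. unfold euler_scale. field. apply Rgt_not_eq, exp_pos. }
  pose proof (Rle_abs (- euler_coef (q ^ m) i)) as Habs. rewrite Rabs_Ropp in Habs.
  pose proof euler_scale_pos. nra.
Qed.

Lemma euler_pert_at_1 : euler_pert 0 <> 0.
Proof.
  replace 0%nat with (m * 0)%nat by lia. rewrite euler_pert_multiple. simpl.
  pose proof euler_scale_pos. lra.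
Qed.

End EulerPerturbation.

Theorem theorem3 (q : R) (f F : R -> R) (m : nat) (C : R) :
  0 < q < 1 ->
  nonneg_distribution_function F ->
  is_qdensity_of q f F ->
  (forall k : nat, exists v, qmoment q f k v) ->
  (1 <= m)%nat ->
  0 < C ->
  (forall j : nat, f (/ q ^ (m * j)) >= C * q ^ (m * (j * (j + 1) / 2))) ->
  qmoment_indeterminate q f.
Proof.
  intros Hq HF Hd Hmom Hm HC Hgrowth.
  apply (perturbation_indeterminate q Hq f F HF Hd (euler_pert q m C)) with (t := 0%nat).
  - apply euler_pert_nonneg; [exact Hq | exact Hm | exact HC | | exact Hgrowth].
    intro t. rewrite <- qz_opp_nat. exact (qdensity_nonneg q Hq f F HF Hd _).
  - apply euler_pert_moments; assumption.
  - exact Hmom.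
  - apply euler_pert_at_1; assumption.
Qed.
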